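(* A matrix $E\in \mathbb{C}^{m\times m}$ is idempotent ($E^2=E$) if and only if there exist positive integers $p,q$ and matrices $U\in \mathbb{C}^{m\times p}$, $V\in \mathbb{C}^{q\times m}$ such that $E=U(VU)^{\dagger}V$.
   Context: $A^{\dagger}$ denotes the Moore–Penrose inverse of a matrix $A$, i.e. the unique matrix $X$ with $AXA=A$, $XAX=X$, $(AX)^*=AX$, $(XA)^*=XA$, where $^*$ denotes conjugate transpose. *)

From HB Require Import structures.
From mathcomp Require Import all_boot all_order all_algebra.
From mathcomp.real_closed Require Import complex.
From Stdlib Require Import ClassicalEpsilon.
Set Implicit Arguments. Unset Strict Implicit. Unset Printing Implicit Defensive.
Import Order.TTheory GRing.Theory Num.Theory.
Local Open Scope ring_scope.

Definition ctrmx (C : numClosedFieldType) (m n : nat) (A : 'M[C]_(m, n))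
  : 'M[C]_(n, m) := map_mx Num.conj (A^T).

Definition is_MP (C : numClosedFieldType) (m n : nat)
  (A : 'M[C]_(m, n)) (X : 'M[C]_(n, m)) : Prop :=
  [/\ A *m X *m A = A, X *m A *m X = X,
      ctrmx (A *m X) = A *m X & ctrmx (X *m A) = X *m A].

Definition mpinv (C : numClosedFieldType) (m n : nat) (A : 'M[C]_(m, n))
  : 'M[C]_(n, m) := epsilon (inhabits 0) (fun X => is_MP A X).

(* If E is idempotent, take U = V = E: then VU = E and E E^+ E = E.
   Conversely, any X with X (VU) X = X (in particular X = (VU)^+) makes
   U X V idempotent, since (U X V)(U X V) = U (X (VU) X) V.  The only real
   work is the existence of the Moore-Penrose inverse, which follows from a
   full-rank factorisation A = B D: with ' the conjugate transpose,
   X = D' (D D')^-1 (B' B)^-1 B'. *)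
From HB Require Import structures.
From mathcomp Require Import all_boot all_order all_algebra.
From mathcomp.real_closed Require Import complex.
From Stdlib Require Import ClassicalEpsilon.
From mathcomp Require Import zify.
Set Implicit Arguments. Unset Strict Implicit. Unset Printing Implicit Defensive.
Import Order.TTheory GRing.Theory Num.Theory.
Local Open Scope ring_scope.

Section MoorePenrose.
Variable C : numClosedFieldType.

Lemma ctrmx_mul m n p (A : 'M[C]_(m, n)) (B : 'M[C]_(n, p)) :
  ctrmx (A *m B) = ctrmx B *m ctrmx A.
Proof. by rewrite /ctrmx trmx_mul map_mxM. Qed.

Lemma ctrmxK m n (A : 'M[C]_(m, n)) : ctrmx (ctrmx A) = A.
Proof. by apply/matrixP=> i j; rewrite /ctrmx !mxE conjCK. Qed.

Lemma ctrmx_inv n (A : 'M[C]_n) : ctrmx (invmx A) = invmx (ctrmx A).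
Proof. by rewrite /ctrmx trmx_inv map_invmx. Qed.

Lemma mxrank_ctrmx m n (A : 'M[C]_(m, n)) : \rank (ctrmx A) = \rank A.
Proof. by rewrite /ctrmx mxrank_map mxrank_tr. Qed.

Lemma mulmx_ctrmx_eq0 m n (A : 'M[C]_(m, n)) : A *m ctrmx A = 0 -> A = 0.
Proof.
move=> /matrixP AAt0; apply/matrixP=> i j; rewrite mxE.
have sum_norm2 : \sum_k `|A i k| ^+ 2 = 0.
  have := AAt0 i i; rewrite !mxE => AAtii; rewrite -[RHS]AAtii.
  by apply: eq_bigr => k _; rewrite !mxE normCK.
have /psumr_eq0P norm2_0 := sum_norm2.
by apply/eqP; rewrite -normr_eq0 -sqrf_eq0 norm2_0 // => k _; rewrite exprn_ge0.
Qed.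

Lemma mxrank_mulmx_ctrmx m n (A : 'M[C]_(m, n)) :
  \rank (A *m ctrmx A) = \rank A.
Proof.
apply/eqP; rewrite eqn_leq mxrankM_maxl /=.
have ker_sub : (kermx (A *m ctrmx A) <= kermx A)%MS.
  apply/sub_kermxP; apply: mulmx_ctrmx_eq0.
  by rewrite ctrmx_mul mulmxA -[_ *m A *m _]mulmxA mulmx_ker mul0mx.
have := mxrankS ker_sub; rewrite !mxrank_ker.
have := rank_leq_row A; have := rank_leq_row (A *m ctrmx A).
lia.
Qed.

Lemma is_MP_full_rank_factor m n r (B : 'M[C]_(m, r)) (D : 'M[C]_(r, n)) :
  D *m ctrmx D \in unitmx -> ctrmx B *m B \in unitmx ->
  is_MP (B *m D)
    (ctrmx D *m invmx (D *m ctrmx D) *m invmx (ctrmx B *m B) *m ctrmx B).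
Proof.
set P := D *m ctrmx D; set Q := ctrmx B *m B => uP uQ.
have P_herm : ctrmx P = P by rewrite /P ctrmx_mul ctrmxK.
have Q_herm : ctrmx Q = Q by rewrite /Q ctrmx_mul ctrmxK.
set X := ctrmx D *m _ *m _ *m _.
have AX : B *m D *m X = B *m invmx Q *m ctrmx B.
  by rewrite !mulmxA -(mulmxA B D) -/P mulmxK.
have XA : X *m (B *m D) = ctrmx D *m invmx P *m D.
  by rewrite !mulmxA -(mulmxA _ (ctrmx B) B) -/Q mulmxKV // -!mulmxA.
split.
- by rewrite AX !mulmxA -(mulmxA _ (ctrmx B) B) -/Q mulmxKV.
- by rewrite XA !mulmxA -(mulmxA _ D (ctrmx D)) -/P mulmxKV // -!mulmxA.
- by rewrite AX !ctrmx_mul ctrmxK ctrmx_inv Q_herm mulmxA.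
- by rewrite XA !ctrmx_mul ctrmxK ctrmx_inv P_herm mulmxA.
Qed.

Lemma is_MP_exists m n (A : 'M[C]_(m, n)) : exists X, is_MP A X.
Proof.
rewrite -(mulmx_base A); eexists; apply: is_MP_full_rank_factor.
  by rewrite -row_free_unit /row_free mxrank_mulmx_ctrmx; exact: row_base_free.
rewrite -[X in _ *m X](ctrmxK (col_base A)).
rewrite -row_free_unit /row_free mxrank_mulmx_ctrmx mxrank_ctrmx.
exact: col_base_full.
Qed.

Lemma mpinvP m n (A : 'M[C]_(m, n)) : is_MP A (mpinv A).
Proof. exact: epsilon_spec (is_MP_exists A). Qed.

End MoorePenrose.

Lemma idempotent_mulmx_reflexive_ginv (R : pzRingType) m p q
    (U : 'M[R]_(m, p)) (V : 'M[R]_(q, m)) (X : 'M[R]_(p, q)) :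
  X *m (V *m U) *m X = X -> U *m X *m V *m (U *m X *m V) = U *m X *m V.
Proof. by move=> XAX; rewrite !mulmxA -(mulmxA _ V U) -(mulmxA U X) -(mulmxA U) XAX. Qed.

Theorem proposition2 (R : rcfType) (m : nat) (E : 'M[R[i]]_m) :
  E *m E = E <->
  exists (p q : nat) (U : 'M[R[i]]_(m, p)) (V : 'M[R[i]]_(q, m)),
    [/\ (0 < p)%N, (0 < q)%N & E = U *m mpinv (V *m U) *m V].
Proof.
split=> [EE | [p [q [U [V [_ _ ->]]]]]]; last first.
  apply: idempotent_mulmx_reflexive_ginv.
  by case: (mpinvP (V *m U)).
case: m E EE => [|n] E EE.
  by exists 1%N, 1%N, 0, 0; split; rewrite // [LHS]flatmx0 [RHS]flatmx0.
exists n.+1, n.+1, E, E; rewrite EE.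
by case: (mpinvP E).
Qed.
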